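(* For every finite tuple $(b_1,\dots,b_k)$ of elements of $\mathbb{S}$ there is $g\in\mathrm{Aut}(\mathbb{S})$ such that the set of columns meeting $\{b_1,\dots,b_k\}$ and the set of columns meeting $\{g(b_1),\dots,g(b_k)\}$ are disjoint.
   Context: Directed graphs are simple and loopless ($x\to y$ denotes a directed edge, at most one direction between two distinct vertices). $\mathcal{S}$ is the class of finite such graphs in which $x\perp y:\Leftrightarrow\neg(x\to y\vee y\to x)$ is an equivalence relation (its classes are called columns) and satisfying the parity condition: for $x_1\neq x_2$, $y_1\neq y_2$ with $x_1\perp x_2$, $y_1\perp y_2$, the number of directed edges from $\{x_1,x_2\}$ to $\{y_1,y_2\}$ is even. $\mathbb{S}$ (the semigeneric directed graph) is the Fraïssé limit of $\mathcal{S}$, i.e. the countable homogeneous directed graph whose finite induced substructures are exactly the members of $\mathcal{S}$ up to isomorphism. *)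

From mathcomp Require Import all_boot.
Set Implicit Arguments. Unset Strict Implicit. Unset Printing Implicit Defensive.

Definition perp (V : Type) (E : rel V) (x y : V) : bool := ~~ E x y && ~~ E y x.

(* Two vertices lie in the same column iff they are perp-related
   (columns are the classes of the equivalence relation perp). *)
Definition same_column (V : Type) (E : rel V) (x y : V) : bool := perp E x y.

(* A finite directed graph on 'I_n (every finite directed graph is isomorphic
   to one of these) belongs to the class S. *)
Definition in_S (n : nat) (e : rel 'I_n) : Prop :=
  (forall x, ~~ e x x) /\
  (forall x y, ~~ (e x y && e y x)) /\
  (* perp is an equivalence relation (reflexivity/symmetry are automatic) *)
  (forall x y z, perp e x y -> perp e y z -> perp e x z) /\
  (forall x1 x2 y1 y2, x1 != x2 -> y1 != y2 -> perp e x1 x2 -> perp e y1 y2 ->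
     ~~ odd (e x1 y1 + e x1 y2 + e x2 y1 + e x2 y2)).

Definition is_aut (V : Type) (E : rel V) (g : V -> V) : Prop :=
  bijective g /\ forall x y, E (g x) (g y) = E x y.

(* (V, E) is (a copy of) the semigeneric directed graph: the countable
   homogeneous directed graph whose age is exactly S (up to isomorphism). *)
Definition is_semigeneric (V : Type) (E : rel V) : Prop :=
  (exists c : V -> nat, injective c) /\
  (forall n (f : 'I_n -> V), injective f -> in_S (fun i j => E (f i) (f j))) /\
  (forall n (e : rel 'I_n), in_S e ->
     exists f : 'I_n -> V, injective f /\ forall i j, E (f i) (f j) = e i j) /\
  (forall n (f h : 'I_n -> V), injective f -> injective h ->
     (forall i j, E (f i) (f j) = E (h i) (h j)) ->
     exists g, is_aut E g /\ forall i, g (f i) = h i).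

From mathcomp Require Import all_boot.
From Stdlib Require Import Classical.
Set Implicit Arguments. Unset Strict Implicit. Unset Printing Implicit Defensive.

(* Let a_1, ..., a_n enumerate the distinct entries of the tuple b and let A be
   the graph they induce.  Take two disjoint copies of A and add every edge
   from the first copy to the second: this "doubled" graph is again in S,
   since perp only relates vertices of the same copy (so its classes are those
   of A, split in two) and a parity quadruple either lies inside one copy or
   contributes 0 or 4 cross edges.  By universality it embeds into the graph
   as L_1, ..., L_n (first copy) and R_1, ..., R_n (second copy).  By
   homogeneity there are automorphisms f with f(L_i) = a_i and h with
   h(a_i) = R_i; then g = f o h sends a_j to f(R_j), while a_i = f(L_i), and
   L_i -> R_j is an edge, so a_i and g(a_j) are never perp. *)

(* Every finite family of points is covered by an injective finite family;
   this is needed because homogeneity only applies to injective tuples. *)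
Lemma enumerate_family (V : Type) (k : nat) (b : 'I_k -> V) :
  exists n (a : 'I_n -> V), injective a /\ forall i, exists j, b i = a j.
Proof.
elim: k b => [|k IHk] b; first by exists 0, b; split=> // -[].
have [n [a [inj_a cover]]] := IHk (b \o lift ord_max).
have cover_lift j : exists l, b (lift ord_max j) = a l by apply: cover.
have [[l0 bmax_a] | bmax_new] := classic (exists l, b ord_max = a l).
  exists n, a; split=> // i.
  by case: (unliftP ord_max i) => [j ->|->]; [apply: cover_lift | exists l0].
pose a' (l : 'I_n.+1) := if unlift ord_max l is Some l' then a l' else b ord_max.
have a'_lift l : a' (lift ord_max l) = a l by rewrite /a' liftK.
have a'_max : a' ord_max = b ord_max by rewrite /a' unlift_none.
exists n.+1, a'; split.
  move=> x y; case: (unliftP ord_max x) => [x' ->|->];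
    case: (unliftP ord_max y) => [y' ->|->]; rewrite ?a'_lift ?a'_max //.
  - by move/inj_a->.
  - by move=> ax'; case: bmax_new; exists x'.
  - by move=> ay'; case: bmax_new; exists y'.
move=> i; case: (unliftP ord_max i) => [j ->|->]; last by exists ord_max.
by have [l ->] := cover_lift j; exists (lift ord_max l); rewrite a'_lift.
Qed.

Definition pair_rel n (e : rel 'I_n) (u v : 'I_n + 'I_n) : bool :=
  match u, v with
  | inl i, inl j | inr i, inr j => e i j
  | inl _, inr _ => true
  | inr _, inl _ => false
  end.

Definition double_graph n (e : rel 'I_n) : rel 'I_(n + n) :=
  fun x y => pair_rel e (split x) (split y).

(* The class S is closed under doubling: the perp classes of the doubled
   graph are those of e in each copy, and a parity quadruple meeting both
   copies consists of 0 or 4 cross edges. *)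
Lemma in_S_double n (e : rel 'I_n) : in_S e -> in_S (double_graph e).
Proof.
rewrite /double_graph => -[irr [asym [trans par]]].
have split_neq (x y : 'I_(n + n)) : x != y -> split x != split y.
  by apply: contra_neq => /(can_inj splitK).
split; [|split; [|split]].
- by move=> x; case: (split x) => i; apply: irr.
- by move=> x y; case: (split x) (split y) => [i|i] [j|j] //; apply: asym.
- move=> x y z; rewrite /perp.
  by case: (split x) (split y) (split z) => [i|i] [j|j] [l|l] //=; apply: trans.
- move=> x1 x2 y1 y2 /split_neq + /split_neq; rewrite /perp.
  case: (split x1) (split x2) (split y1) (split y2) => [i1|i1] [i2|i2] [j1|j1] [j2|j2] //=;
    by move=> Ni Nj; apply: par; [apply: contra_neq Ni | apply: contra_neq Nj] => ->.
Qed.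

Lemma aut_comp (V : Type) (E : rel V) (f g : V -> V) :
  is_aut E f -> is_aut E g -> is_aut E (f \o g).
Proof.
move=> [bij_f Ef] [bij_g Eg]; split; first exact: bij_comp.
by move=> x y /=; rewrite Ef Eg.
Qed.

Lemma aut_perp (V : Type) (E : rel V) (g : V -> V) (x y : V) :
  is_aut E g -> perp E (g x) (g y) = perp E x y.
Proof. by move=> [_ Eg]; rewrite /perp !Eg. Qed.

Section Semigeneric.
Variables (V : Type) (E : rel V).
Hypothesis semigeneric_E : is_semigeneric E.

Lemma two_dominating_copies n (a : 'I_n -> V) : injective a ->
  exists L R : 'I_n -> V, [/\ injective L, injective R,
    forall i j, E (L i) (L j) = E (a i) (a j),
    forall i j, E (R i) (R j) = E (a i) (a j) &
    forall i j, E (L i) (R j)].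
Proof.
move=> inj_a; have [_ [age_E [universal_E _]]] := semigeneric_E.
have [F [inj_F EF]] := universal_E _ _ (in_S_double (age_E _ _ inj_a)).
exists (F \o lshift n), (F \o @rshift n n); split.
- by move=> i j /inj_F /lshift_inj.
- by move=> i j /inj_F /rshift_inj.
- by move=> i j; rewrite /= EF /double_graph (unsplitK (inl i)) (unsplitK (inl j)).
- by move=> i j; rewrite /= EF /double_graph (unsplitK (inr i)) (unsplitK (inr j)).
- by move=> i j; rewrite /= EF /double_graph (unsplitK (inl i)) (unsplitK (inr j)).
Qed.

(* For an injective tuple a there is an automorphism moving it entirely off
   its own columns: h moves a onto the copy R, and f moves L back onto a. *)
Lemma column_separating_aut n (a : 'I_n -> V) : injective a ->
  exists g : V -> V, is_aut E g /\
    forall i j, ~~ same_column E (a i) (g (a j)).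
Proof.
move=> inj_a; have [_ [_ [_ homogeneous_E]]] := semigeneric_E.
have [L [R [inj_L inj_R EL ER ELR]]] := two_dominating_copies inj_a.
have [f [aut_f fL]] := homogeneous_E _ _ _ inj_L inj_a EL.
have [h [aut_h ha]] := homogeneous_E _ _ _ inj_a inj_R (fun i j => esym (ER i j)).
exists (f \o h); split; first exact: aut_comp.
move=> i j; rewrite /same_column /= ha -fL aut_perp //.
by rewrite /perp ELR.
Qed.

End Semigeneric.

Theorem mainTheorem9 (V : Type) (E : rel V) (HS : is_semigeneric E)
  (k : nat) (b : 'I_k -> V) :
  exists g : V -> V, is_aut E g /\
    forall i j : 'I_k, ~~ same_column E (b i) (g (b j)).
Proof.
have [n [a [inj_a cover]]] := enumerate_family b.
have [g [aut_g separates]] := column_separating_aut HS inj_a.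
exists g; split=> // i j.
by have [u ->] := cover i; have [w ->] := cover j.
Qed.
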